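(* Let $A\in\mathbb{C}^{n\times n}$, and fix $A^-\in A\{1\}$ and $A^{GD}\in A\{GD\}$. Let $A^{1GD}=A^{-}AA^{GD}$. Then: (i) $AA^{1GD}A=A$ and $A^{1GD}AA^{1GD}=A^{1GD}$; (ii) $A^mA^{1GD} =A^mA^{GD}$ and $A^{1GD}A^m = A^{-}A^m$ for every positive integer $m$; (iii) $AA^{1GD}=P_{R(A),N(AA^{GD})}$; (iv) $A^{1GD}A=P_{R(A^{-}A),N(A)}$.
   Context: For $A\in\mathbb{C}^{n\times n}$, $ind(A)$ is the smallest nonnegative integer $k$ with $\mathrm{rank}(A^k)=\mathrm{rank}(A^{k+1})$. $A\{1\}$ is the set of matrices $X$ with $AXA=A$. With $k=ind(A)$, $A\{GD\}$ is the set of G-Drazin inverses of $A$: matrices $X$ with $AXA=A$, $XA^{k+1}=A^k$, $A^{k+1}X=A^k$. $R(\cdot)$, $N(\cdot)$ denote range and null space; $P_{S,T}$ is the projector onto $S$ along $T$. *)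

From HB Require Import structures.
From mathcomp Require Import all_boot all_order all_algebra.
From mathcomp Require Import complex.
From mathcomp Require Import reals.
Set Implicit Arguments. Unset Strict Implicit. Unset Printing Implicit Defensive.
Import Order.TTheory GRing.Theory Num.Theory.
Local Open Scope ring_scope.

Section Defs.
Variables (F : fieldType) (n : nat).

(* ind(A): smallest k with rank(A^k) = rank(A^{k+1}); such a k <= n always exists. *)
Definition ind (A : 'M[F]_n) : nat :=
  find (fun k => \rank (A ^+ k) == \rank (A ^+ k.+1)) (iota 0 n.+1).

Definition inner_inverse (A X : 'M[F]_n) : Prop := A *m X *m A = A.

Definition GD_inverse (A X : 'M[F]_n) : Prop :=
  let k := ind A in
  [/\ A *m X *m A = A, X *m A ^+ k.+1 = A ^+ k & A ^+ k.+1 *m X = A ^+ k].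

Definition range (A : 'M[F]_n) (x : 'cV[F]_n) : Prop := exists y, x = A *m y.
Definition nullsp (A : 'M[F]_n) (x : 'cV[F]_n) : Prop := A *m x = 0.

Definition is_projector (P : 'M[F]_n) (S T : 'cV[F]_n -> Prop) : Prop :=
  [/\ forall x, exists s t, [/\ S s, T t & x = s + t],
      forall x, S x -> T x -> x = 0,
      forall s, S s -> P *m s = s
    & forall t, T t -> P *m t = 0].
End Defs.

From mathcomp Require Import all_boot all_order all_algebra.
From mathcomp Require Import complex.
From mathcomp Require Import reals.
Import GRing.Theory.
Local Open Scope ring_scope.

(* For any inner
   inverse X, the products A X and X A are idempotent, A X has the range of A
   and X A the null space of A; A^{1GD} acts like A^GD on the left of A and
   like A^- on its right, which gives every item. *)

Lemma is_projector_idem {F : fieldType} {n : nat} {P : 'M[F]_n} :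
  P *m P = P -> is_projector P (range P) (nullsp P).
Proof.
move=> PP; split.
- move=> x; exists (P *m x), (x - P *m x); split.
  + by exists x.
  + by rewrite /nullsp mulmxBr mulmxA PP subrr.
  + by rewrite addrC subrK.
- by move=> x [y ->]; rewrite /nullsp mulmxA PP.
- by move=> _ [y ->]; rewrite mulmxA PP.
- by [].
Qed.

Lemma is_projector_ext {F : fieldType} {n : nat} {P : 'M[F]_n}
    {S S' T T' : 'cV[F]_n -> Prop} :
  is_projector P S T ->
  (forall x, S x <-> S' x) -> (forall x, T x <-> T' x) ->
  is_projector P S' T'.
Proof.
move=> [decomp disj onS onT] eqS eqT; split.
- move=> x; have [s [t [Ss Tt ->]]] := decomp x.
  by exists s, t; split; [apply/eqS | apply/eqT |].
- by move=> x /eqS Sx /eqT Tx; apply: disj.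
- by move=> s /eqS; apply: onS.
- by move=> t /eqT; apply: onT.
Qed.

Lemma mulmx_expr_l {R : pzRingType} {n : nat} (m : nat) {A Y Z : 'M[R]_n} :
  (0 < m)%N -> A *m Y = A *m Z -> A ^+ m *m Y = A ^+ m *m Z.
Proof.
by case: m => // m _ AYZ; rewrite exprSr -mulmxE -!mulmxA AYZ.
Qed.

Lemma mulmx_expr_r {R : pzRingType} {n : nat} (m : nat) {A Y Z : 'M[R]_n} :
  (0 < m)%N -> Y *m A = Z *m A -> Y *m A ^+ m = Z *m A ^+ m.
Proof.
by case: m => // m _ YAZ; rewrite exprS -mulmxE !mulmxA YAZ.
Qed.

Lemma GD_inverse_inner {F : fieldType} {n : nat} {A X : 'M[F]_n} :
  GD_inverse A X -> inner_inverse A X.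
Proof. by case. Qed.

Section InnerInverse.
Context {F : fieldType} {n : nat} {A X : 'M[F]_n}.
Hypothesis AXA : A *m X *m A = A.

Lemma inner_inverse_idem_l : A *m X *m (A *m X) = A *m X.
Proof. by rewrite mulmxA AXA. Qed.

Lemma inner_inverse_idem_r : X *m A *m (X *m A) = X *m A.
Proof. by rewrite -!mulmxA (mulmxA A) AXA. Qed.

Lemma range_inner_mulmx x : range (A *m X) x <-> range A x.
Proof.
split=> [[y ->] | [y ->]]; first by exists (X *m y); rewrite mulmxA.
by exists (A *m y); rewrite !mulmxA AXA.
Qed.

Lemma nullsp_inner_mulmx x : nullsp (X *m A) x <-> nullsp A x.
Proof.
rewrite /nullsp; split=> [XAx | Ax]; last by rewrite -mulmxA Ax mulmx0.
by rewrite -AXA -!mulmxA (mulmxA X) XAx mulmx0.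
Qed.

Lemma mulmx_inner_l (M : 'M[F]_n) : A *m (X *m A *m M) = A *m M.
Proof. by rewrite !mulmxA AXA. Qed.

Lemma mulmx_inner_r (M : 'M[F]_n) : M *m A *m X *m A = M *m A.
Proof. by rewrite -!mulmxA (mulmxA A) AXA. Qed.

End InnerInverse.

Theorem theorem3p3 (R : realType) (n : nat) (A Am AGD : 'M[R[i]]_n) :
  inner_inverse A Am -> GD_inverse A AGD ->
  let A1GD := Am *m A *m AGD in
  [/\ A *m A1GD *m A = A /\ A1GD *m A *m A1GD = A1GD,
      (forall m : nat, (0 < m)%N ->
         A ^+ m *m A1GD = A ^+ m *m AGD /\ A1GD *m A ^+ m = Am *m A ^+ m),
      is_projector (A *m A1GD) (range A) (nullsp (A *m AGD))
    & is_projector (A1GD *m A) (range (Am *m A)) (nullsp A)].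
Proof.
move=> AAmA /GD_inverse_inner AAGDA A1GD.
have AA1GD : A *m A1GD = A *m AGD by exact: mulmx_inner_l.
have A1GDA : A1GD *m A = Am *m A by exact: mulmx_inner_r.
split.
- split; first by rewrite AA1GD.
  by rewrite A1GDA mulmxA inner_inverse_idem_r.
- by move=> m m_gt0; split; [apply: mulmx_expr_l | apply: mulmx_expr_r].
- rewrite AA1GD.
  apply: is_projector_ext (is_projector_idem (inner_inverse_idem_l AAGDA)) _ _.
    exact: range_inner_mulmx.
  by move=> x; apply: iff_refl.
- rewrite A1GDA.
  apply: is_projector_ext (is_projector_idem (inner_inverse_idem_r AAmA)) _ _.
    by move=> x; apply: iff_refl.
  exact: nullsp_inner_mulmx.
Qed.
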